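(* Let $G_1,G_2,H_1,H_2\in SL^+_{sym}(2)$, let $g_i,h_i$ be the largest eigenvalues of $G_i,H_i$, and assume $K^{min}=\sqrt{g_1h_1g_2h_2}$. Then there exist $A,B\in O(2)$ such that $$A^TG_1A=\begin{pmatrix}g_1&0\\0&\frac1{g_1}\end{pmatrix},\quad A^TG_2A=\begin{pmatrix}\frac1{g_2}&0\\0&g_2\end{pmatrix},\quad B^TH_1B=\begin{pmatrix}h_1&0\\0&\frac1{h_1}\end{pmatrix},\quad B^TH_2B=\begin{pmatrix}\frac1{h_2}&0\\0&h_2\end{pmatrix}.$$
   Context: $SL^+_{sym}(2)$: real symmetric positive definite $2\times2$ matrices with determinant $1$; $SL(2)$: real $2\times2$ matrices of determinant $1$; $O(2)$: orthogonal $2\times 2$ matrices; $\lambda_{\max}$: largest eigenvalue. $K^{min}:=\min_{A,B\in SL(2)}\max_{i=1,2}\lambda_{\max}(B^TG_iB)\,\lambda_{\max}(A^TH_iA)$. *)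

From HB Require Import structures.
From mathcomp Require Import all_boot all_order all_algebra.
Set Implicit Arguments. Unset Strict Implicit. Unset Printing Implicit Defensive.
Import Order.TTheory GRing.Theory Num.Theory.
Local Open Scope ring_scope.

Definition SL2 (R : rcfType) (A : 'M[R]_2) : Prop := \det A = 1.

Definition O2 (R : rcfType) (A : 'M[R]_2) : Prop := A^T *m A = 1%:M.

Definition sym_posdef (R : rcfType) (G : 'M[R]_2) : Prop :=
  G^T = G /\ forall v : 'cV[R]_2, v != 0 -> 0 < (v^T *m G *m v) 0 0.

Definition SLsym2 (R : rcfType) (G : 'M[R]_2) : Prop :=
  sym_posdef G /\ \det G = 1.

(* Largest eigenvalue of a 2x2 real matrix with real spectrum (e.g. symmetric):
   the larger root of its characteristic polynomial X^2 - tr M X + det M. *)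
Definition lmax (R : rcfType) (M : 'M[R]_2) : R :=
  (\tr M + Num.sqrt (\tr M ^+ 2 - 4 * \det M)) / 2.

Definition Kobj (R : rcfType) (G1 G2 H1 H2 A B : 'M[R]_2) : R :=
  Num.max (lmax (B^T *m G1 *m B) * lmax (A^T *m H1 *m A))
          (lmax (B^T *m G2 *m B) * lmax (A^T *m H2 *m A)).

Definition Kmin_is (R : rcfType) (G1 G2 H1 H2 : 'M[R]_2) (c : R) : Prop :=
  (exists A B, SL2 A /\ SL2 B /\ Kobj G1 G2 H1 H2 A B = c) /\
  (forall A B, SL2 A -> SL2 B -> c <= Kobj G1 G2 H1 H2 A B).

Definition diag2 (R : rcfType) (a b : R) : 'M[R]_2 :=
  \matrix_(i < 2, j < 2) if i == j then (if (i : nat) == 0%N then a else b) else 0.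

(* Symmetric 2x2 matrices of determinant 1 form the hyperboloid model of the
   hyperbolic plane, SL(2) acts on it by isometries through G |-> B^T G B, and
   lmax G = e^d with d the distance from G to 1.  For G1, G2 a matrix B in SL(2)
   moves their midpoint (G1 + G2) / sqrt (det (G1 + G2)) to 1, so that
   lmax (B^T G1 B) = lmax (B^T G2 B) = e^(d(G1, G2) / 2), whose square is at most
   lmax G1 * lmax G2 by the triangle inequality through 1.  Doing the same for
   H1, H2, the hypothesis on K^min forces equality in both triangle inequalities,
   i.e. 1 lies on the geodesic through G1 and G2 (resp. H1 and H2), and the
   rotation taking this geodesic to the diagonal matrices gives A (resp. B). *)

From HB Require Import structures.
From mathcomp Require Import all_boot all_order all_algebra.
From mathcomp Require Import ring lra.
Import Order.TTheory GRing.Theory Num.Theory.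
Set Implicit Arguments. Unset Strict Implicit. Unset Printing Implicit Defensive.
Local Open Scope ring_scope.

Section TwoByTwo.
Variable R : rcfType.
Implicit Types (a b c d m p q r u v x y : R) (B G M S X Y : 'M[R]_2).

Definition mx2 a b c d : 'M[R]_2 :=
  \matrix_(i < 2, j < 2) if i == 0 then (if j == 0 then a else b)
                         else (if j == 0 then c else d).

Lemma ord2P (i : 'I_2) : i = 0 \/ i = 1.
Proof. by case: i => [[|[|//]] ?]; [left|right]; apply/val_inj. Qed.

Lemma matrix2P M G : M 0 0 = G 0 0 -> M 0 1 = G 0 1 -> M 1 0 = G 1 0 ->
  M 1 1 = G 1 1 -> M = G.
Proof. by move=> *; apply/matrixP => i j; case: (ord2P i) => ->; case: (ord2P j) => ->. Qed.

Lemma mx2E M : M = mx2 (M 0 0) (M 0 1) (M 1 0) (M 1 1).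
Proof. by apply: matrix2P; rewrite !mxE. Qed.

Lemma mul_mx2 a b c d a' b' c' d' :
  mx2 a b c d *m mx2 a' b' c' d' =
  mx2 (a * a' + b * c') (a * b' + b * d') (c * a' + d * c') (c * b' + d * d').
Proof.
apply/matrixP => i j; rewrite mxE big_ord_recl big_ord1 !mxE /=.
by case: (ord2P i) => ->; case: (ord2P j) => ->.
Qed.

Lemma tr_mx2 a b c d : (mx2 a b c d)^T = mx2 a c b d.
Proof. by apply: matrix2P; rewrite !mxE. Qed.

Lemma add_mx2 a b c d a' b' c' d' :
  mx2 a b c d + mx2 a' b' c' d' = mx2 (a + a') (b + b') (c + c') (d + d').
Proof. by apply: matrix2P; rewrite !mxE. Qed.

Lemma scalar_mx2 a : a%:M = mx2 a 0 0 a.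
Proof. by apply: matrix2P; rewrite !mxE. Qed.

Lemma diag2E a d : diag2 a d = mx2 a 0 0 d.
Proof. by apply: matrix2P; rewrite !mxE. Qed.

Lemma det_mat2 M : \det M = M 0 0 * M 1 1 - M 0 1 * M 1 0.
Proof.
rewrite (expand_det_row _ 0) !big_ord_recl big_ord0 /cofactor !det_mx11 !mxE /=.
have -> : (lift 0 0 : 'I_2) = 1 by apply/val_inj.
have -> : (lift (1 : 'I_2) 0 : 'I_2) = 0 by apply/val_inj.
have -> : (ord0 : 'I_2) = 0 by apply/val_inj.
by rewrite /bump /= expr0 expr1 mul1r mulN1r addr0 mulrN.
Qed.

Lemma mxtrace_mat2 M : \tr M = M 0 0 + M 1 1.
Proof. by rewrite /mxtrace big_ord_recl big_ord1; congr (_ + M _ _); apply/val_inj. Qed.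

Lemma det_mx2 a b c d : \det (mx2 a b c d) = a * d - b * c.
Proof. by rewrite det_mat2 !mxE. Qed.

Lemma mxtrace_mx2 a b c d : \tr (mx2 a b c d) = a + d.
Proof. by rewrite mxtrace_mat2 !mxE. Qed.

(* The symmetric matrix with Minkowski coordinates [(p, q, r)]; those of
   determinant [1] form the hyperboloid [p^2 - q^2 - r^2 = 1]. *)
Definition hyp p q r : 'M[R]_2 := mx2 (p + q) r r (p - q).

Lemma tr_hyp p q r : (hyp p q r)^T = hyp p q r.
Proof. by rewrite tr_mx2. Qed.

Lemma hypE M : M^T = M ->
  M = hyp ((M 0 0 + M 1 1) / 2) ((M 0 0 - M 1 1) / 2) (M 0 1).
Proof.
move=> /matrixP /(_ 0 1); rewrite mxE => sym.
by rewrite {1}[M]mx2E -sym /hyp; congr mx2; field.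
Qed.

Lemma det_hyp p q r : \det (hyp p q r) = p ^+ 2 - (q ^+ 2 + r ^+ 2).
Proof. by rewrite det_mx2; ring. Qed.

Lemma mxtrace_hyp p q r : \tr (hyp p q r) = 2 * p.
Proof. by rewrite mxtrace_mx2; ring. Qed.

Lemma add_hyp p q r p' q' r' :
  hyp p q r + hyp p' q' r' = hyp (p + p') (q + q') (r + r').
Proof. by rewrite add_mx2 /hyp; congr mx2; ring. Qed.

Lemma sqrt_hyp p q r : p ^+ 2 - (q ^+ 2 + r ^+ 2) = 1 ->
  Num.sqrt (p ^+ 2 - 1) = Num.sqrt (q ^+ 2 + r ^+ 2).
Proof. by move=> det1; congr Num.sqrt; lra. Qed.

Lemma SLsym2_hyp M : SLsym2 M ->
  exists p q r, M = hyp p q r /\ 1 <= p /\ p ^+ 2 - (q ^+ 2 + r ^+ 2) = 1.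
Proof.
move=> [[sym posM] detM].
set p := (M 0 0 + M 1 1) / 2; set q := (M 0 0 - M 1 1) / 2.
exists p, q, (M 0 1); have EM := hypE sym; split=> //.
rewrite -det_hyp -EM detM; split=> //.
pose e1 : 'cV[R]_2 := \col_i (if i == 0 then 1 else 0).
have e1_neq0 : e1 != 0.
  by apply/eqP => /matrixP /(_ 0 0); rewrite !mxE /= => /eqP; rewrite oner_eq0.
have := posM e1 e1_neq0.
rewrite !mxE big_ord_recl big_ord1 !mxE !big_ord_recl !big_ord0 !mxE /=.
rewrite !mulr1 !mulr0 !mul0r !addr0 mul1r => M00_gt0.
have pqE : p + q = M 0 0 by rewrite /p /q; field.
have pq_gt0 : 0 < p + q by rewrite pqE.
have pq_ge1 : 1 <= (p + q) * (p - q).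
  have : (p + q) * (p - q) = 1 + M 0 1 ^+ 2.
    by move: detM; rewrite {1}EM det_hyp -/p -/q => <-; ring.
  by have := sqr_ge0 (M 0 1); lra.
have : 0 < p - q by rewrite -(pmulr_rgt0 _ pq_gt0); lra.
nra.
Qed.

(* For [u = cosh t] with [t >= 0], [exp_arcosh u = e^t]. *)
Definition exp_arcosh u := u + Num.sqrt (u ^+ 2 - 1).

Lemma exp_arcosh_gt0 u : 1 <= u -> 0 < exp_arcosh u.
Proof. by move=> u_ge1; have := sqrtr_ge0 (u ^+ 2 - 1); rewrite /exp_arcosh; lra. Qed.

Lemma exp_arcoshV u : 1 <= u -> (exp_arcosh u)^-1 = u - Num.sqrt (u ^+ 2 - 1).
Proof.
move=> u_ge1; have := exp_arcosh_gt0 u_ge1; rewrite /exp_arcosh.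
set s := Num.sqrt _ => e_gt0.
have s2 : s ^+ 2 = u ^+ 2 - 1 by rewrite sqr_sqrtr // subr_ge0 exprn_ege1.
have -> : u - s = (u + s)^-1 * ((u + s) * (u - s)) by rewrite mulKf ?gt_eqF.
have -> : (u + s) * (u - s) = u ^+ 2 - s ^+ 2 by ring.
by rewrite s2 (_ : _ - _ = 1) ?mulr1 //; ring.
Qed.

Lemma exp_arcosh_inj u v : 1 <= u -> 1 <= v -> exp_arcosh u = exp_arcosh v -> u = v.
Proof.
have cosh_half w : 1 <= w -> w = (exp_arcosh w + (exp_arcosh w)^-1) / 2.
  by move=> w_ge1; rewrite exp_arcoshV // /exp_arcosh; field.
by move=> u_ge1 v_ge1 e_uv; rewrite (cosh_half u) // (cosh_half v) // e_uv.
Qed.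

Lemma exp_arcosh_le u v : 1 <= u -> u <= v -> exp_arcosh u <= exp_arcosh v.
Proof.
move=> u_ge1 uv; apply: lerD => //.
by rewrite ler_sqrt ?subr_ge0 ?exprn_ege1 ?lerD2r ?ler_pXn2r ?nnegrE //; lra.
Qed.

Lemma exp_arcoshM u v : 1 <= u -> 1 <= v ->
  exp_arcosh u * exp_arcosh v =
  exp_arcosh (u * v + Num.sqrt (u ^+ 2 - 1) * Num.sqrt (v ^+ 2 - 1)).
Proof.
move=> u_ge1 v_ge1; rewrite /exp_arcosh.
set a := Num.sqrt (u ^+ 2 - 1); set b := Num.sqrt (v ^+ 2 - 1).
have a2 : a ^+ 2 = u ^+ 2 - 1 by rewrite sqr_sqrtr // subr_ge0 exprn_ege1.
have b2 : b ^+ 2 = v ^+ 2 - 1 by rewrite sqr_sqrtr // subr_ge0 exprn_ege1.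
have a_ge0 : 0 <= a := sqrtr_ge0 _.
have b_ge0 : 0 <= b := sqrtr_ge0 _.
have -> : (u * v + a * b) ^+ 2 - 1 = (u * b + v * a) ^+ 2.
  by rewrite -[1](_ : (u ^+ 2 - a ^+ 2) * (v ^+ 2 - b ^+ 2) = 1);
    [ring | rewrite a2 b2; ring].
rewrite sqrtr_sqr ger0_norm; first ring.
by apply: addr_ge0; apply: mulr_ge0 => //; lra.
Qed.

Lemma sqr_exp_arcosh u : 1 <= u -> exp_arcosh u ^+ 2 = exp_arcosh (2 * u ^+ 2 - 1).
Proof.
move=> u_ge1; rewrite expr2 exp_arcoshM // -(expr2 (Num.sqrt _)) sqr_sqrtr ?subr_ge0 ?exprn_ege1 //.
by congr exp_arcosh; ring.
Qed.

Lemma lmax_det1 M : \det M = 1 -> lmax M = exp_arcosh (\tr M / 2).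
Proof.
move=> detM; rewrite /lmax /exp_arcosh detM.
rewrite (_ : \tr M ^+ 2 - 4 * 1 = 2 ^+ 2 * ((\tr M / 2) ^+ 2 - 1)); last by field.
by rewrite sqrtrM ?sqr_ge0 // sqrtr_sqr ger0_norm //; field.
Qed.

Lemma lmax_hyp p q r : p ^+ 2 - (q ^+ 2 + r ^+ 2) = 1 -> lmax (hyp p q r) = exp_arcosh p.
Proof. by move=> det1; rewrite lmax_det1 ?det_hyp // mxtrace_hyp; congr exp_arcosh; field. Qed.

Lemma cauchy_schwarz2 q1 r1 q2 r2 :
  `|q1 * q2 + r1 * r2| <= Num.sqrt (q1 ^+ 2 + r1 ^+ 2) * Num.sqrt (q2 ^+ 2 + r2 ^+ 2).
Proof.
rewrite -sqrtrM ?addr_ge0 ?sqr_ge0 // -sqrtr_sqr ler_sqrt ?mulr_ge0 ?addr_ge0 ?sqr_ge0 //.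
rewrite -subr_ge0 (_ : _ - _ = (q1 * r2 - q2 * r1) ^+ 2) ?sqr_ge0 //; ring.
Qed.

(* For [p_i = cosh t_i]: [cosh (t1 - t2) >= 1]. *)
Lemma cosh_sub_ge1 p1 p2 : 1 <= p1 -> 1 <= p2 ->
  1 <= p1 * p2 - Num.sqrt (p1 ^+ 2 - 1) * Num.sqrt (p2 ^+ 2 - 1).
Proof.
move=> p1_ge1 p2_ge1.
set s1 := Num.sqrt (p1 ^+ 2 - 1); set s2 := Num.sqrt (p2 ^+ 2 - 1).
have s1_2 : s1 ^+ 2 = p1 ^+ 2 - 1 by rewrite sqr_sqrtr // subr_ge0 exprn_ege1.
have s2_2 : s2 ^+ 2 = p2 ^+ 2 - 1 by rewrite sqr_sqrtr // subr_ge0 exprn_ege1.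
have := sqrtr_ge0 (p1 ^+ 2 - 1); have := sqrtr_ge0 (p2 ^+ 2 - 1); rewrite -/s1 -/s2.
move=> s2_ge0 s1_ge0.
have sq : (p1 * p2 - s1 * s2) ^+ 2 = 1 + (p1 * s2 - p2 * s1) ^+ 2.
  rewrite -[1](_ : (p1 ^+ 2 - s1 ^+ 2) * (p2 ^+ 2 - s2 ^+ 2) = 1);
    [ring | rewrite s1_2 s2_2; ring].
have : 0 < p1 * p2 - s1 * s2 by rewrite subr_gt0; apply: ltr_pM; nra.
have := sqr_ge0 (p1 * s2 - p2 * s1); nra.
Qed.

(* A point [(p, q, r)] with [p >= 1] on the hyperboloid [p^2 - q^2 - r^2 = 1] is at
   distance [arcosh p] from [(1, 0, 0)], and two such points are at distance
   [arcosh L], [L] their Minkowski product: this is the triangle inequality through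
   [(1, 0, 0)], equality forcing [(q1, r1)] and [(q2, r2)] to point in opposite
   directions. *)
Lemma hyperbolic_triangle p1 q1 r1 p2 q2 r2 :
  1 <= p1 -> p1 ^+ 2 - (q1 ^+ 2 + r1 ^+ 2) = 1 ->
  1 <= p2 -> p2 ^+ 2 - (q2 ^+ 2 + r2 ^+ 2) = 1 ->
  let L := p1 * p2 - (q1 * q2 + r1 * r2) in
  [/\ 1 <= L, exp_arcosh L <= exp_arcosh p1 * exp_arcosh p2 &
      exp_arcosh L = exp_arcosh p1 * exp_arcosh p2 ->
      q1 * q2 + r1 * r2 = - (Num.sqrt (q1 ^+ 2 + r1 ^+ 2) * Num.sqrt (q2 ^+ 2 + r2 ^+ 2))].
Proof.
move=> p1_ge1 det1 p2_ge1 det2 L.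
have := cauchy_schwarz2 q1 r1 q2 r2.
rewrite -(sqrt_hyp det1) -(sqrt_hyp det2) ler_norml => /andP [cs_lo cs_hi].
have := cosh_sub_ge1 p1_ge1 p2_ge1.
set s := _ * Num.sqrt _ in cs_lo cs_hi * => L_ge1.
have {}L_ge1 : 1 <= L by rewrite /L; lra.
have L_le : L <= p1 * p2 + s by rewrite /L; lra.
rewrite exp_arcoshM // -/s; split=> // [|/(exp_arcosh_inj L_ge1) L_eq].
  exact: exp_arcosh_le.
by have := L_eq (le_trans L_ge1 L_le); rewrite /L; lra.
Qed.

Lemma det_congr_SL2 B M : SL2 B -> \det (B^T *m M *m B) = \det M.
Proof. by move=> detB; rewrite !det_mulmx det_tr detB mul1r mulr1. Qed.

Lemma cholesky_scalar S m : S^T = S -> 0 < S 1 1 -> 0 < m -> \det S = m ^+ 2 ->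
  exists B, SL2 B /\ B^T *m S *m B = m%:M.
Proof.
move=> /matrixP /(_ 0 1); rewrite mxE => symS d_gt0 m_gt0.
rewrite [S]mx2E symS det_mx2 scalar_mx2.
move: (S 0 0) (S 0 1) (S 1 1) d_gt0 => a b d d_gt0 detS.
set h := Num.sqrt (m / d).
have h_gt0 : 0 < h by rewrite sqrtr_gt0 divr_gt0.
have h2 : h ^+ 2 = m / d by rewrite sqr_sqrtr // ltW // divr_gt0.
have [d_neq0 h_neq0] : d != 0 /\ h != 0 by rewrite !gt_eqF.
exists (mx2 h^-1 0 (- b / (d * h)) h); split.
  by rewrite /SL2 det_mx2 mulVf // mul0r subr0.
rewrite tr_mx2 !mul_mx2; congr mx2.
- transitivity ((a * d - b * b) / (d * h ^+ 2)); first by field; apply/andP.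
  by rewrite detS h2; field; rewrite d_neq0 (gt_eqF m_gt0).
- by field; apply/andP.
- by field; apply/andP.
- transitivity (d * h ^+ 2); first by ring.
  by rewrite h2; field.
Qed.

Lemma mxtrace_det1_add_scalar X Y m : \det X = 1 -> \det Y = 1 -> X + Y = m%:M ->
  m != 0 -> \tr X = m.
Proof.
move=> detX detY XY m_neq0.
have EY : Y = m%:M - X by rewrite -XY addrC addKr.
move: detX detY; rewrite EY !det_mat2 mxtrace_mat2 !mxE /= => detX detY.
apply: (mulfI m_neq0); nra.
Qed.

Lemma SL2_balancing G1 G2 : G1^T = G1 -> G2^T = G2 -> \det G1 = 1 -> \det G2 = 1 ->
  0 < (G1 + G2) 1 1 -> 0 < \det (G1 + G2) ->
  let x := exp_arcosh (Num.sqrt (\det (G1 + G2)) / 2) in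
  exists B, [/\ SL2 B, lmax (B^T *m G1 *m B) = x & lmax (B^T *m G2 *m B) = x].
Proof.
move=> sym1 sym2 det1 det2 d_gt0 det_gt0 x.
have [B [detB BSB]] : exists B, SL2 B /\ B^T *m (G1 + G2) *m B = (Num.sqrt (\det (G1 + G2)))%:M.
  apply: cholesky_scalar => //.
  - by rewrite raddfD /= sym1 sym2.
  - by rewrite sqrtr_gt0.
  - by rewrite sqr_sqrtr // ltW.
rewrite mulmxDr mulmxDl in BSB.
have m_neq0 : Num.sqrt (\det (G1 + G2)) != 0 by rewrite gt_eqF ?sqrtr_gt0.
have lmaxE G : \det G = 1 -> \tr (B^T *m G *m B) = Num.sqrt (\det (G1 + G2)) ->
    lmax (B^T *m G *m B) = x.
  by move=> detG trG; rewrite lmax_det1 ?det_congr_SL2 // trG.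
exists B; split => //; apply: lmaxE => //.
  by apply: (mxtrace_det1_add_scalar _ _ BSB); rewrite ?det_congr_SL2.
by rewrite addrC in BSB; apply: (mxtrace_det1_add_scalar _ _ BSB); rewrite ?det_congr_SL2.
Qed.

Definition rot c z : 'M[R]_2 := mx2 c (- z) z c.

Lemma rot_O2 c z : c ^+ 2 + z ^+ 2 = 1 -> O2 (rot c z).
Proof.
move=> cz; rewrite /O2 tr_mx2 mul_mx2 scalar_mx2.
by congr mx2; [rewrite -cz | | | rewrite -cz]; ring.
Qed.

Lemma rot_conj_hyp c z p q r : c ^+ 2 + z ^+ 2 = 1 ->
  (rot c z)^T *m hyp p q r *m rot c z =
  hyp p (q * (c ^+ 2 - z ^+ 2) + r * (2 * c * z)) (r * (c ^+ 2 - z ^+ 2) - q * (2 * c * z)).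
Proof.
move=> cz; rewrite [p in RHS](_ : p = p * (c ^+ 2 + z ^+ 2)); last by rewrite cz mulr1.
by rewrite tr_mx2 !mul_mx2 /hyp; congr mx2; ring.
Qed.

Lemma half_angle x y : x ^+ 2 + y ^+ 2 = 1 ->
  exists c z, [/\ c ^+ 2 + z ^+ 2 = 1, c ^+ 2 - z ^+ 2 = x & 2 * c * z = y].
Proof.
move=> xy; have [x_eqN1|x_neqN1] := eqVneq x (-1).
  have y_eq0 : y = 0.
    by apply/eqP; rewrite -sqrf_eq0; apply/eqP; rewrite x_eqN1 in xy; lra.
  by exists 0, 1; rewrite x_eqN1 y_eq0; split; ring.
have x_gtN1 : -1 < x by rewrite lt_neqAle eq_sym x_neqN1 /=; nra.
set n := Num.sqrt (2 + 2 * x).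
have n_gt0 : 0 < n by rewrite sqrtr_gt0; lra.
have n2 : n ^+ 2 = 2 + 2 * x by rewrite sqr_sqrtr //; lra.
have y2 : y ^+ 2 = 1 - x ^+ 2 by lra.
have den_neq0 : 2 + 2 * x != 0 by rewrite -n2 sqrf_eq0 gt_eqF.
exists ((1 + x) / n), (y / n); rewrite !expr_div_n n2 y2.
split; [by field | by field |].
transitivity (2 * (1 + x) * y / n ^+ 2); first by field; rewrite gt_eqF.
by rewrite n2; field.
Qed.

Section Antipodal.
Variables q1 r1 q2 r2 : R.
Let s1 := Num.sqrt (q1 ^+ 2 + r1 ^+ 2).
Let s2 := Num.sqrt (q2 ^+ 2 + r2 ^+ 2).

Lemma antipodal_unit_vector : q1 * q2 + r1 * r2 = - (s1 * s2) ->
  exists x y, [/\ x ^+ 2 + y ^+ 2 = 1, q1 * x + r1 * y = s1, r1 * x - q1 * y = 0,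
                  q2 * x + r2 * y = - s2 & r2 * x - q2 * y = 0].
Proof.
move=> anti.
have sqr_s q r : Num.sqrt (q ^+ 2 + r ^+ 2) ^+ 2 = q ^+ 2 + r ^+ 2.
  by rewrite sqr_sqrtr // addr_ge0 ?sqr_ge0.
have s1_2 : s1 ^+ 2 = q1 ^+ 2 + r1 ^+ 2 := sqr_s q1 r1.
have s2_2 : s2 ^+ 2 = q2 ^+ 2 + r2 ^+ 2 := sqr_s q2 r2.
have [s1_ge0 s2_ge0] : 0 <= s1 /\ 0 <= s2 by rewrite !sqrtr_ge0.
have cross : q1 * r2 - q2 * r1 = 0.
  apply/eqP; rewrite -sqrf_eq0; apply/eqP.
  transitivity ((s1 * s2) ^+ 2 - (q1 * q2 + r1 * r2) ^+ 2); last by rewrite anti; ring.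
  by rewrite exprMn s1_2 s2_2; ring.
have [s_eq0|s_neq0] := eqVneq (s1 + s2) 0.
  have s_zero q r : Num.sqrt (q ^+ 2 + r ^+ 2) = 0 -> q = 0 /\ r = 0.
    move=> /(congr1 (fun x => x ^+ 2)); rewrite sqr_s expr0n => /eqP.
    by rewrite paddr_eq0 ?sqr_ge0 // !sqrf_eq0 => /andP [/eqP -> /eqP ->].
  have [s1_0 s2_0] : s1 = 0 /\ s2 = 0 by lra.
  have [-> ->] := s_zero _ _ s1_0; have [-> ->] := s_zero _ _ s2_0.
  by exists 1, 0; rewrite s1_0 s2_0; split; ring.
have k2 : (s1 + s2) ^+ 2 = (q1 - q2) ^+ 2 + (r1 - r2) ^+ 2.
  transitivity (s1 ^+ 2 + s2 ^+ 2 + 2 * (s1 * s2)); first by ring.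
  by rewrite s1_2 s2_2 -[s1 * s2]opprK -anti; ring.
(* Both [(q1, r1) / s1] and [- (q2, r2) / s2] equal this vector when defined. *)
exists ((q1 - q2) / (s1 + s2)), ((r1 - r2) / (s1 + s2)); split.
- by rewrite !expr_div_n -mulrDl -k2 divff // sqrf_eq0.
- transitivity ((s1 ^+ 2 - (q1 * q2 + r1 * r2)) / (s1 + s2)); first by rewrite s1_2; field.
  by rewrite anti; field.
- transitivity ((q1 * r2 - q2 * r1) / (s1 + s2)); first by field.
  by rewrite cross mul0r.
- transitivity (((q1 * q2 + r1 * r2) - s2 ^+ 2) / (s1 + s2)); first by rewrite s2_2; field.
  by rewrite anti; field.
- transitivity ((q1 * r2 - q2 * r1) / (s1 + s2)); first by field.
  by rewrite cross mul0r.
Qed.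

Lemma antipodal_rotation p1 p2 : q1 * q2 + r1 * r2 = - (s1 * s2) ->
  exists A, [/\ O2 A, A^T *m hyp p1 q1 r1 *m A = hyp p1 s1 0
              & A^T *m hyp p2 q2 r2 *m A = hyp p2 (- s2) 0].
Proof.
move=> /antipodal_unit_vector [x [y [xy e1 o1 e2 o2]]].
have [c [z [cz xE yE]]] := half_angle xy.
exists (rot c z); rewrite !rot_conj_hyp // xE yE e1 o1 e2 o2.
by split=> //; apply: rot_O2.
Qed.

End Antipodal.

Definition opposite_diagonalizable G1 G2 := exists A, [/\ O2 A,
  A^T *m G1 *m A = diag2 (lmax G1) (lmax G1)^-1 &
  A^T *m G2 *m A = diag2 (lmax G2)^-1 (lmax G2)].

Lemma antipodal_opposite_diagonalizable p1 q1 r1 p2 q2 r2 :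
  1 <= p1 -> p1 ^+ 2 - (q1 ^+ 2 + r1 ^+ 2) = 1 ->
  1 <= p2 -> p2 ^+ 2 - (q2 ^+ 2 + r2 ^+ 2) = 1 ->
  q1 * q2 + r1 * r2 = - (Num.sqrt (q1 ^+ 2 + r1 ^+ 2) * Num.sqrt (q2 ^+ 2 + r2 ^+ 2)) ->
  opposite_diagonalizable (hyp p1 q1 r1) (hyp p2 q2 r2).
Proof.
move=> p1_ge1 det1 p2_ge1 det2 /(antipodal_rotation p1 p2) [A [oA A1 A2]].
exists A; rewrite A1 A2 !lmax_hyp // !exp_arcoshV // /exp_arcosh.
by rewrite !(sqrt_hyp det1) !(sqrt_hyp det2) !diag2E; split=> //; congr mx2; ring.
Qed.

Lemma sqr_eq_of_sqrt_mul_le x y U V : 0 < x -> 0 < y ->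
  x ^+ 2 <= U -> y ^+ 2 <= V -> Num.sqrt (U * V) <= x * y -> x ^+ 2 = U /\ y ^+ 2 = V.
Proof.
move=> x_gt0 y_gt0 xU yV sqrt_le.
have [x2_gt0 y2_gt0] : 0 < x ^+ 2 /\ 0 < y ^+ 2 by rewrite !exprn_gt0.
have [U_gt0 V_gt0] : 0 < U /\ 0 < V by split; lra.
have UV_le : U * V <= x ^+ 2 * y ^+ 2.
  have := sqr_sqrtr (mulr_ge0 (ltW U_gt0) (ltW V_gt0)).
  have := sqrtr_ge0 (U * V); move: sqrt_le; set w := Num.sqrt _; nra.
by split; apply/eqP; rewrite eq_le ?xU ?yV /=; nra.
Qed.

Lemma balanced_congruence_bound G1 G2 : SLsym2 G1 -> SLsym2 G2 ->
  exists B x, [/\ SL2 B, lmax (B^T *m G1 *m B) = x /\ lmax (B^T *m G2 *m B) = x, 0 < x,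
    x ^+ 2 <= lmax G1 * lmax G2 &
    x ^+ 2 = lmax G1 * lmax G2 -> opposite_diagonalizable G1 G2].
Proof.
move=> /SLsym2_hyp [p1 [q1 [r1 [-> [p1_ge1 det1]]]]].
move=> /SLsym2_hyp [p2 [q2 [r2 [-> [p2_ge1 det2]]]]].
have [L_ge1 L_le L_eq] := hyperbolic_triangle p1_ge1 det1 p2_ge1 det2.
set L := _ - _ in L_ge1 L_le L_eq.
have detS : \det (hyp p1 q1 r1 + hyp p2 q2 r2) = 2 * L + 2.
  rewrite add_hyp det_hyp; transitivity
    ((p1 ^+ 2 - (q1 ^+ 2 + r1 ^+ 2)) + (p2 ^+ 2 - (q2 ^+ 2 + r2 ^+ 2)) + 2 * L).
    by rewrite /L; ring.
  by rewrite det1 det2; ring.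
have S11_gt0 : 0 < (hyp p1 q1 r1 + hyp p2 q2 r2) 1 1.
  have q_lt_p p q r : 1 <= p -> p ^+ 2 - (q ^+ 2 + r ^+ 2) = 1 -> q < p.
    by move=> p_ge1 detp; have := sqr_ge0 r; nra.
  by rewrite add_hyp !mxE /=; have := q_lt_p _ _ _ p1_ge1 det1;
    have := q_lt_p _ _ _ p2_ge1 det2; lra.
have detS_gt0 : 0 < \det (hyp p1 q1 r1 + hyp p2 q2 r2) by rewrite detS; lra.
have [B [sB BG1 BG2]] := SL2_balancing (tr_hyp p1 q1 r1) (tr_hyp p2 q2 r2)
  (etrans (det_hyp _ _ _) det1) (etrans (det_hyp _ _ _) det2) S11_gt0 detS_gt0.
move: BG1 BG2; rewrite detS; set u := Num.sqrt _ / 2 => BG1 BG2.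
have u2 : 2 * u ^+ 2 - 1 = L by rewrite /u expr_div_n sqr_sqrtr; [field | lra].
have u_ge1 : 1 <= u.
  have : 0 <= u by rewrite /u divr_ge0 ?sqrtr_ge0.
  nra.
exists B, (exp_arcosh u); split=> //; first exact: exp_arcosh_gt0.
  by rewrite sqr_exp_arcosh // u2 !lmax_hyp.
rewrite sqr_exp_arcosh // u2 !lmax_hyp // => /L_eq.
exact: antipodal_opposite_diagonalizable.
Qed.

End TwoByTwo.

Theorem mainTheorem8 (R : rcfType) (G1 G2 H1 H2 : 'M[R]_2) :
  SLsym2 G1 -> SLsym2 G2 -> SLsym2 H1 -> SLsym2 H2 ->
  Kmin_is G1 G2 H1 H2
    (Num.sqrt (lmax G1 * lmax H1 * lmax G2 * lmax H2)) ->
  exists A B : 'M[R]_2, O2 A /\ O2 B /\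
    A^T *m G1 *m A = diag2 (lmax G1) (lmax G1)^-1 /\
    A^T *m G2 *m A = diag2 (lmax G2)^-1 (lmax G2) /\
    B^T *m H1 *m B = diag2 (lmax H1) (lmax H1)^-1 /\
    B^T *m H2 *m B = diag2 (lmax H2)^-1 (lmax H2).
Proof.
move=> sG1 sG2 sH1 sH2 [_ Kmin_le].
have [B [x [sB [BG1 BG2] x_gt0 x_le x_eq]]] := balanced_congruence_bound sG1 sG2.
have [A [y [sA [AH1 AH2] y_gt0 y_le y_eq]]] := balanced_congruence_bound sH1 sH2.
have := Kmin_le A B sA sB; rewrite /Kobj BG1 BG2 AH1 AH2 maxxx.
rewrite (_ : _ * _ * _ * _ = lmax G1 * lmax G2 * (lmax H1 * lmax H2)); last by ring.
move/(sqr_eq_of_sqrt_mul_le x_gt0 y_gt0 x_le y_le) => [/x_eq [UA [oA A1 A2]]].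
move=> /y_eq [UB [oB B1 B2]].
by exists UA, UB.
Qed.
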